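(* Let $\mu$ be a Borel probability measure on $\mathbb{R}$ satisfying Assumption A (see context), let $t>1$, and let $E$ be a zero of $m_\mu$. Then there exists a constant $M>0$ such that $\mathrm{dist}(\omega_t(z),E)\ge M$ for all $z\in\mathbb{R}$.
   Context: Assumption A: $n_{\mathrm{ac}},n_{\mathrm{pp}},n^{\mathrm{out}}_{\mathrm{pp}}\ge1$ integers; $\mu$ is a compactly supported Borel probability measure on $\mathbb{R}$ whose singular part is supported on a finite set $\{x_1,\dots,x_{n_{\mathrm{pp}}}\}$, whose absolutely continuous part $\mu_{\mathrm{ac}}$ is supported on $n_{\mathrm{ac}}$ intervals $[E_j^-,E_j^+]$, with exactly $n^{\mathrm{out}}_{\mathrm{pp}}$ atoms outside $\mathrm{supp}(\mu_{\mathrm{ac}})$, no atom at the endpoints $E_j^\pm$, and density $\rho$ with $C_j^{-1}<\rho(x)/\big((x-E_j^-)^{t_j^-}(E_j^+-x)^{t_j^+}\big)<C_j$ a.e. on $[E_j^-,E_j^+]$ for some $-1<t_j^\pm<1$, $C_j\ge1$. $m_\mu(z)=\int\frac{1}{x-z}\mu(dx)$ (a zero of $m_\mu$ is a real point $E$ where $m_\mu(E)=0$), $F_\mu=-1/m_\mu$. $\omega_t:\mathbb{C}^+\to\mathbb{C}^+$ is the analytic subordination function with $\mathrm{Im}\,\omega_t(z)\ge\mathrm{Im}\,z$, $\omega_t(i\eta)/(i\eta)\to1$, $t\omega_t(z)-z=(t-1)F_\mu(\omega_t(z))$, extended continuously to $\mathbb{C}^+\cup\mathbb{R}$ (values in $\mathbb{C}^+\cup\mathbb{R}\cup\{\infty\}$).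 *)

From HB Require Import structures.
From mathcomp Require Import all_boot all_order all_algebra.
From mathcomp Require Import all_classical all_reals all_analysis.
From mathcomp Require Import complex.
Set Implicit Arguments. Unset Strict Implicit. Unset Printing Implicit Defensive.
Import Order.TTheory GRing.Theory Num.Theory.
Import numFieldNormedType.Exports.
Local Open Scope classical_set_scope.
Local Open Scope ring_scope.

Section Defs.
Variable R : realType.

Definition cre (z : R[i]) : R := let: Complex a _ := z in a.
Definition cim (z : R[i]) : R := let: Complex _ b := z in b.

Definition cabs (z : R[i]) : R := Num.sqrt (cre z ^+ 2 + cim z ^+ 2).

Definition cR (x : R) : R[i] := Complex x 0.

Definition Cplus (z : R[i]) : Prop := 0 < cim z.

(* Stieltjes transform m_mu(z) = \int 1/(x - z) mu(dx), written via its real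
   and imaginary parts:  1/(x-z) = ((x - cre z) + i cim z) / ((x-cre z)^2+(cim z)^2). *)
Definition stieltjes (mu : probability R R) (z : R[i]) : R[i] :=
  Complex
    (\int[mu]_(x in setT) ((x - cre z) / ((x - cre z) ^+ 2 + cim z ^+ 2)))
    (\int[mu]_(x in setT) (cim z / ((x - cre z) ^+ 2 + cim z ^+ 2))).

Definition Fmu (mu : probability R R) (z : R[i]) : R[i] := - (stieltjes mu z)^-1.

(* E is a zero of m_mu: the boundary value m_mu(E) := lim_{eta -> 0+} m_mu(E + i eta)
   exists and equals 0. *)
Definition stieltjes_zero (mu : probability R R) (E : R) : Prop :=
  forall eps : R, 0 < eps -> exists2 d : R, 0 < d &
    forall eta : R, 0 < eta -> eta < d -> cabs (stieltjes mu (Complex E eta)) < eps.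

Definition analytic_Cplus (f : R[i] -> R[i]) : Prop :=
  forall z, Cplus z -> exists f' : R[i], forall eps : R, 0 < eps ->
    exists2 d : R, 0 < d & forall h : R[i], h != 0 -> cabs h < d ->
      cabs ((f (z + h) - f z) / h - f') < eps.

Definition subordination (mu : probability R R) (t : R) (omega : R[i] -> R[i]) : Prop :=
  [/\ analytic_Cplus omega,
      (forall z, Cplus z -> cim z <= cim (omega z)),
      (forall eps : R, 0 < eps -> exists K : R, forall eta : R, K < eta ->
         cabs (omega (Complex 0 eta) / Complex 0 eta - 1) < eps) &
      (forall z, Cplus z ->
         cR t * omega z - z = cR (t - 1) * Fmu mu (omega z))].

(* omegab : R -> option R[i] is the continuous extension of omega to the real
   line, with values in the Riemann sphere (None stands for infinity):
   omega z -> omegab x as z -> x within C^+. *)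
Definition boundary_extension (omega : R[i] -> R[i]) (omegab : R -> option R[i]) : Prop :=
  forall x : R,
    match omegab x with
    | Some w => forall eps : R, 0 < eps -> exists2 d : R, 0 < d &
        forall z, Cplus z -> cabs (z - cR x) < d -> cabs (omega z - w) < eps
    | None => forall K : R, exists2 d : R, 0 < d &
        forall z, Cplus z -> cabs (z - cR x) < d -> K < cabs (omega z)
    end.

Definition assumptionA (nac npp nout : nat) (mu : probability R R) : Prop :=
  [/\ (1 <= nac)%N, (1 <= npp)%N, (1 <= nout)%N &
  exists (Em Ep tm tp C : 'I_nac -> R) (xs ws : 'I_npp -> R) (rho : R -> R),
    [/\
        (forall j, Em j < Ep j) /\
        (forall i j, i != j -> Ep i < Em j \/ Ep j < Em i),
        injective xs /\ (forall i, 0 < ws i),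
        [/\ measurable_fun setT rho, (forall x, 0 <= rho x),
            (forall x, (forall j, x \notin `[Em j, Ep j]) -> rho x = 0) &
            (forall A : set R, measurable A ->
               mu A = (\int[lebesgue_measure]_(x in A) (rho x)%:E +
                       \sum_(i < npp) (ws i)%:E * \d_(xs i) A)%E)],
        (forall j, [/\ -1 < tm j < 1, -1 < tp j < 1, 1 <= C j &
           ({ae lebesgue_measure, forall x, x \in `[Em j, Ep j] ->
              ((C j)^-1 < rho x / ((x - Em j) `^ (tm j) * (Ep j - x) `^ (tp j)) < C j)})]) &
        (forall i j, xs i != Em j /\ xs i != Ep j) /\
        (* exactly nout atoms outside supp(mu_ac) = union of the intervals *)
        #|[set i : 'I_npp | [forall j, (xs i < Em j) || (Ep j < xs i)]]| = nout]].

End Defs.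

From HB Require Import structures.
From mathcomp Require Import all_boot all_order all_algebra.
From mathcomp Require Import all_classical all_reals all_analysis.
From mathcomp Require Import complex measurable_realfun.
From mathcomp Require Import ring lra.
Import Order.TTheory GRing.Theory Num.Theory.
Import numFieldNormedType.Exports.
Set Implicit Arguments. Unset Strict Implicit. Unset Printing Implicit Defensive.
Local Open Scope classical_set_scope.
Local Open Scope ring_scope.

(* Write z = omega_t(zeta) with zeta in C^+ and r(z) = \int |x - z|^-2 dmu(x), so
   that Im m(z) = Im z * r(z).  Since Im F = Im m / |m|^2 and Im zeta > 0, the
   imaginary part of t omega - zeta = (t - 1) F(omega) forces
   |m(z)|^2 > (1 - 1/t) r(z).  Near a zero E of m the opposite holds: for
   w = E + i delta, the identity 1/(x - z) - 1/(x - w) = (z - w) / ((x - z)(x - w))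
   and AM-GM give |m(z) - m(w)| <= delta sqrt(r(z)) (1 + r(w)), where
   delta r(w) = Im m(w) is small and r is bounded below near E; hence
   |m(z)|^2 = o(r(z)) as z -> E.  So omega_t keeps a fixed distance from E on C^+,
   and so do its boundary values. *)

Section BoundedContinuous.
Variable R : realType.
Implicit Types f g : R -> R.

Definition bounded_continuous f := continuous f /\ exists B, forall x, `|f x| <= B.

Lemma bounded_continuousD f g : bounded_continuous f -> bounded_continuous g ->
  bounded_continuous (fun x => f x + g x).
Proof.
move=> [cf [B fB]] [cg [C gC]]; split.
  by move=> x; apply: continuousD; [exact: cf | exact: cg].
by exists (B + C) => x; apply: le_trans (ler_normD _ _) _; exact: lerD.
Qed.

Lemma bounded_continuousB f g : bounded_continuous f -> bounded_continuous g ->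
  bounded_continuous (fun x => f x - g x).
Proof.
move=> [cf [B fB]] [cg [C gC]]; split.
  by move=> x; apply: continuousB; [exact: cf | exact: cg].
by exists (B + C) => x; apply: le_trans (ler_normB _ _) _; exact: lerD.
Qed.

Lemma bounded_continuousMl k f : bounded_continuous f ->
  bounded_continuous (fun x => k * f x).
Proof.
move=> [cf [B fB]]; split.
  by move=> x; apply: (continuousM (s := fun=> k)); [exact: cvg_cst | exact: cf].
by exists (`|k| * B) => x; rewrite normrM ler_wpM2l.
Qed.

Lemma bounded_continuous_integrable (mu : {finite_measure set R -> \bar R}) f :
  bounded_continuous f -> mu.-integrable setT (EFin \o f).
Proof.
move=> [cf [B fB]]; apply: measurable_bounded_integrable => //.
- by rewrite fin_num_fun_lty //; exact: fin_num_measure.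
- exact: continuous_measurable_fun.
- exists B; split; first by rewrite num_real.
  by move=> M BM x _ /=; exact: le_trans (fB x) (ltW BM).
Qed.

End BoundedContinuous.

Lemma Rintegral_gt0 d (T : measurableType d) (R : realType) (mu : probability T R)
    (f : T -> R) :
  mu.-integrable setT (EFin \o f) -> (forall x, 0 < f x) -> 0 < \int[mu]_x f x.
Proof.
move=> intf f_gt0; rewrite lt_def Rintegral_ge0 ?andbT; last by move=> x _; exact: ltW.
apply/negP => /eqP int_eq0.
have abs_eq0 : (\int[mu]_x `|(EFin \o f) x| = 0)%E.
  rewrite -[RHS]/(0%:E) -int_eq0 /Rintegral fineK; last exact: integrable_fin_num.
  by apply: eq_integral => x _ /=; rewrite ger0_norm // ltW.
have [N [mN muN0 sub]] :=
  (ae_eq_integral_abs mu measurableT (measurable_int mu intf)).1 abs_eq0.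
have : (mu setT <= mu N)%E.
  apply: le_measure; rewrite ?inE // => x _; apply: sub => /= /(_ I) [] /eqP.
  by rewrite gt_eqF.
by rewrite muN0 probability_setT lee_fin ler10.
Qed.

Section ComplexModulus.
Variable R : realType.
Implicit Types u v z : R[i].

Lemma cabsE z : cabs z = Normc.normc z.
Proof. by case: z. Qed.

Lemma cabs_ge0 z : 0 <= cabs z.
Proof. exact: sqrtr_ge0. Qed.

Lemma cabs_sqr z : cabs z ^+ 2 = cre z ^+ 2 + cim z ^+ 2.
Proof. by rewrite sqr_sqrtr // addr_ge0 ?sqr_ge0. Qed.

Lemma cabsD_le u v : cabs (u + v) <= cabs u + cabs v.
Proof. rewrite !cabsE; exact: le_normcD. Qed.

Lemma cabsN u : cabs (- u) = cabs u.
Proof. rewrite !cabsE; exact: normcN. Qed.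

Lemma cabsM u v : cabs (u * v) = cabs u * cabs v.
Proof. by rewrite !cabsE Normc.normcM. Qed.

Lemma cabsV u : cabs u^-1 = (cabs u)^-1.
Proof. by rewrite !cabsE Normc.normcV. Qed.

Lemma creB u v : cre (u - v) = cre u - cre v.
Proof. by case: u; case: v. Qed.

Lemma cimB u v : cim (u - v) = cim u - cim v.
Proof. by case: u; case: v. Qed.

Lemma cim_cRM (k : R) u : cim (cR k * u) = k * cim u.
Proof. by case: u => a b /=; rewrite mul0r addr0. Qed.

Lemma cim_le_cabs z : cim z <= cabs z.
Proof.
apply: le_trans (ler_norm _) _; rewrite -sqrtr_sqr ler_sqrt ?addr_ge0 ?sqr_ge0 //.
by rewrite ler_wpDl ?sqr_ge0.
Qed.

Lemma dot_le_cabs u v : cre u * cre v + cim u * cim v <= cabs u * cabs v.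
Proof.
apply: le_trans (ler_norm _) _; rewrite -sqrtr_sqr -sqrtrM ?addr_ge0 ?sqr_ge0 //.
rewrite ler_sqrt ?mulr_ge0 ?addr_ge0 ?sqr_ge0 //.
by have := sqr_ge0 (cre u * cim v - cim u * cre v); nra.
Qed.

End ComplexModulus.

Section ComplexIntegral.
Context d (T : measurableType d) (R : realType) (mu : {measure set T -> \bar R}).

Definition Cintegral (f : T -> R[i]) : R[i] :=
  Complex (\int[mu]_x cre (f x)) (\int[mu]_x cim (f x)).

Lemma cabs_Cintegral_le (f : T -> R[i]) (h : T -> R) :
  mu.-integrable setT (EFin \o (fun x => cre (f x))) ->
  mu.-integrable setT (EFin \o (fun x => cim (f x))) ->
  mu.-integrable setT (EFin \o h) ->
  (forall x, cabs (f x) <= h x) -> cabs (Cintegral f) <= \int[mu]_x h x.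
Proof.
move=> int_re int_im int_h f_le_h; set I := Cintegral f.
have intZ (k : R) g : mu.-integrable setT (EFin \o g) ->
    mu.-integrable setT (EFin \o (fun x => k * g x)).
  by move=> /(integrableZl measurableT k); apply: eq_integrable.
have h_ge0 : 0 <= \int[mu]_x h x.
  by apply: Rintegral_ge0 => x _; exact: le_trans (cabs_ge0 _) (f_le_h x).
(* Cauchy-Schwarz: |I|^2 = \int <I, f x> <= |I| \int h. *)
have : cabs I ^+ 2 <= cabs I * \int[mu]_x h x.
  have -> : cabs I ^+ 2 = \int[mu]_x (cre I * cre (f x) + cim I * cim (f x)).
    by rewrite RintegralD ?intZ // !RintegralZl // cabs_sqr !expr2.
  rewrite -RintegralZl //; apply: le_Rintegral => //.
  - exact: eq_integrable (integrableD measurableT (intZ _ _ int_re) (intZ _ _ int_im)).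
  - exact: intZ.
  - by move=> x _; apply: le_trans (dot_le_cabs I (f x)) _; rewrite ler_wpM2l ?cabs_ge0.
by have := cabs_ge0 I; nra.
Qed.

End ComplexIntegral.

Section CauchyKernel.
Variable R : realType.
Implicit Types z w : R[i].

Definition cauchy_kernel z (x : R) : R[i] := (cR x - z)^-1.

Definition dist2_inv z (x : R) : R := ((x - cre z) ^+ 2 + cim z ^+ 2)^-1.

Lemma cre_cauchy_kernel z x : cre (cauchy_kernel z x) = (x - cre z) * dist2_inv z x.
Proof. by case: z => a b; rewrite /cauchy_kernel /dist2_inv /= sub0r sqrrN. Qed.

Lemma cim_cauchy_kernel z x : cim (cauchy_kernel z x) = cim z * dist2_inv z x.
Proof.
by case: z => a b; rewrite /cauchy_kernel /dist2_inv /= sub0r sqrrN mulNr opprK.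
Qed.

Lemma cabs_cauchy_kernel z x : cabs (cauchy_kernel z x) ^+ 2 = dist2_inv z x.
Proof.
by rewrite cabsV exprVn cabs_sqr; case: z => a b; rewrite /dist2_inv /= sub0r sqrrN.
Qed.

Lemma cauchy_kernelB z w x : Cplus z -> Cplus w ->
  cauchy_kernel z x - cauchy_kernel w x = (z - w) * cauchy_kernel z x * cauchy_kernel w x.
Proof.
have sub_neq0 u : Cplus u -> cR x - u != 0.
  case: u => a b; rewrite /Cplus /= => b_gt0; apply/eqP => -[_ /eqP].
  by rewrite sub0r oppr_eq0 gt_eqF.
by move=> Cz Cw; rewrite /cauchy_kernel; field; rewrite !sub_neq0.
Qed.

Lemma cabs_cauchy_kernelB_le z w (l : R) x : Cplus z -> Cplus w -> 0 < l ->
  cabs (cauchy_kernel z x - cauchy_kernel w x) <=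
  cabs (z - w) / 2 * (l * dist2_inv z x + l^-1 * dist2_inv w x).
Proof.
move=> Cz Cw l_gt0; rewrite cauchy_kernelB // !cabsM -!mulrA ler_wpM2l ?cabs_ge0 //.
rewrite -!cabs_cauchy_kernel; set p := cabs (cauchy_kernel z x); set q := cabs _.
have l_l : l * l^-1 = 1 by rewrite mulfV ?gt_eqF.
have li_gt0 : 0 < l^-1 by rewrite invr_gt0.
(* AM-GM: 2 p q <= l p^2 + q^2 / l *)
have := sqr_ge0 (l * p - q); nra.
Qed.

Lemma bounded_continuous_dist2_inv z : Cplus z -> bounded_continuous (dist2_inv z).
Proof.
move=> Cz; have den_gt0 x : 0 < (x - cre z) ^+ 2 + cim z ^+ 2.
  by rewrite ltr_wpDl ?sqr_ge0 ?exprn_gt0.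
split.
  move=> x; apply: (continuousV (s := fun x => (x - cre z) ^+ 2 + cim z ^+ 2)).
    by rewrite gt_eqF.
  apply: (continuousD (g := fun=> cim z ^+ 2)); last exact: cvg_cst.
  apply: (continuous_comp (f := fun x => x - cre z) (g := fun y => y ^+ 2)).
    exact: (continuousB (f := id)) cvg_id (cvg_cst _).
  exact: exprn_continuous.
exists (cim z ^+ 2)^-1 => x; rewrite ger0_norm ?invr_ge0 ?(ltW (den_gt0 x)) //.
by rewrite lef_pV2 ?posrE ?exprn_gt0 // ler_wpDl ?sqr_ge0.
Qed.

Lemma bounded_continuous_cre_cauchy_kernel z : Cplus z ->
  bounded_continuous (fun x => cre (cauchy_kernel z x)).
Proof.
move=> Cz; under [fun x => _]funext do rewrite cre_cauchy_kernel.
have [cont_inv _] := bounded_continuous_dist2_inv Cz.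
split.
  move=> x; apply: (continuousM (s := fun x => x - cre z)); last exact: cont_inv.
  exact: (continuousB (f := id)) cvg_id (cvg_cst _).
exists (cim z)^-1 => x.
have den_gt0 : 0 < (x - cre z) ^+ 2 + cim z ^+ 2 by rewrite ltr_wpDl ?sqr_ge0 ?exprn_gt0.
rewrite /dist2_inv normrM normfV (gtr0_norm den_gt0) ler_pdivrMr // mulrC ler_pdivlMr //.
rewrite -(real_normK (num_real (x - cre z))) -(gtr0_norm Cz).
by have := normr_ge0 (x - cre z); nra.
Qed.

Lemma bounded_continuous_cim_cauchy_kernel z : Cplus z ->
  bounded_continuous (fun x => cim (cauchy_kernel z x)).
Proof.
move=> Cz; under [fun x => _]funext do rewrite cim_cauchy_kernel.
exact/bounded_continuousMl/bounded_continuous_dist2_inv.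
Qed.

End CauchyKernel.

Section Stieltjes.
Variables (R : realType) (mu : probability R R).
Implicit Types z w : R[i].

Definition stieltjes_im_ratio z := \int[mu]_x dist2_inv z x.

Lemma integrable_dist2_inv z : Cplus z -> mu.-integrable setT (EFin \o dist2_inv z).
Proof. by move=> Cz; exact/bounded_continuous_integrable/bounded_continuous_dist2_inv. Qed.

Lemma stieltjesE z : stieltjes mu z = Cintegral mu (cauchy_kernel z).
Proof.
congr Complex; apply: eq_Rintegral => x _.
  by rewrite cre_cauchy_kernel.
by rewrite cim_cauchy_kernel.
Qed.

Lemma cim_stieltjes z : Cplus z -> cim (stieltjes mu z) = cim z * stieltjes_im_ratio z.
Proof. by move=> Cz; rewrite /= -RintegralZl //; exact: integrable_dist2_inv. Qed.

Lemma stieltjes_im_ratio_gt0 z : Cplus z -> 0 < stieltjes_im_ratio z.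
Proof.
move=> Cz; apply: Rintegral_gt0 => [|x]; first exact: integrable_dist2_inv.
by rewrite invr_gt0 ltr_wpDl ?sqr_ge0 // exprn_even_gt0 // lt0r_neq0.
Qed.

Lemma stieltjes_im_ratio_lower (E : R) : exists2 a0, 0 < a0 &
  forall z, Cplus z -> cabs (z - cR E) <= 1 -> a0 <= stieltjes_im_ratio z.
Proof.
pose c : R[i] := Complex 0 (`|E| + 1); have Cc : Cplus c by rewrite /Cplus ltr_wpDl.
exists (4^-1 * stieltjes_im_ratio c); first by rewrite mulr_gt0 ?stieltjes_im_ratio_gt0.
case=> a b Cz zE; rewrite -RintegralZl ?integrable_dist2_inv //.
have int_c : mu.-integrable setT (EFin \o (fun x => 4^-1 * dist2_inv c x)).
  exact/bounded_continuous_integrable/bounded_continuousMl/bounded_continuous_dist2_inv.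
apply: le_Rintegral; rewrite ?integrable_dist2_inv // => x _.
rewrite /dist2_inv /= -invfM.
have P_gt0 : 0 < (x - a) ^+ 2 + b ^+ 2 by rewrite ltr_wpDl ?sqr_ge0 ?exprn_gt0.
have Q_gt0 : 0 < (x - 0) ^+ 2 + (`|E| + 1) ^+ 2 by rewrite ltr_wpDl ?sqr_ge0 ?exprn_gt0.
rewrite lef_pV2 ?posrE ?mulr_gt0 //.
have : cabs ((a +i* b)%C - cR E) ^+ 2 <= 1 by have := cabs_ge0 ((a +i* b)%C - cR E); nra.
rewrite cabs_sqr /= subr0 => zE2.
(* (x - a)^2 <= 2 x^2 + 2 a^2 and a^2 <= 2 E^2 + 2 (a - E)^2 *)
have := sqr_ge0 (x + a); have := sqr_ge0 (a - 2 * E); have := normr_ge0 E.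
have := real_normK (num_real E); nra.
Qed.

Lemma integrable_cre_cauchy_kernel z : Cplus z ->
  mu.-integrable setT (EFin \o (fun x => cre (cauchy_kernel z x))).
Proof.
by move=> Cz; exact/bounded_continuous_integrable/bounded_continuous_cre_cauchy_kernel.
Qed.

Lemma integrable_cim_cauchy_kernel z : Cplus z ->
  mu.-integrable setT (EFin \o (fun x => cim (cauchy_kernel z x))).
Proof.
by move=> Cz; exact/bounded_continuous_integrable/bounded_continuous_cim_cauchy_kernel.
Qed.

Lemma stieltjesB z w : Cplus z -> Cplus w ->
  stieltjes mu z - stieltjes mu w =
  Cintegral mu (fun x => cauchy_kernel z x - cauchy_kernel w x).
Proof.
move=> Cz Cw; rewrite !stieltjesE /=; congr Complex.
- under [RHS]eq_Rintegral do rewrite creB.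
  by rewrite RintegralB ?integrable_cre_cauchy_kernel.
- under [RHS]eq_Rintegral do rewrite cimB.
  by rewrite RintegralB ?integrable_cim_cauchy_kernel.
Qed.

Lemma cabs_stieltjesB_le z w (l : R) : Cplus z -> Cplus w -> 0 < l ->
  cabs (stieltjes mu z - stieltjes mu w) <=
  cabs (z - w) / 2 * (l * stieltjes_im_ratio z + l^-1 * stieltjes_im_ratio w).
Proof.
move=> Cz Cw l_gt0; rewrite stieltjesB // /stieltjes_im_ratio.
have bc_Ml (u : R[i]) k : Cplus u -> bounded_continuous (fun x => k * dist2_inv u x).
  by move=> Cu; exact/bounded_continuousMl/bounded_continuous_dist2_inv.
have int_z := bounded_continuous_integrable mu (bc_Ml _ l Cz).
have int_w := bounded_continuous_integrable mu (bc_Ml _ l^-1 Cw).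
have bc_sum : bounded_continuous (fun x => l * dist2_inv z x + l^-1 * dist2_inv w x).
  exact: bounded_continuousD (bc_Ml _ _ Cz) (bc_Ml _ _ Cw).
rewrite -!RintegralZl ?integrable_dist2_inv // -RintegralD //.
rewrite -RintegralZl ?bounded_continuous_integrable //.
apply: cabs_Cintegral_le => [|||x].
- under eq_fun do rewrite creB.
  by apply/bounded_continuous_integrable/bounded_continuousB;
    exact: bounded_continuous_cre_cauchy_kernel.
- under eq_fun do rewrite cimB.
  by apply/bounded_continuous_integrable/bounded_continuousB;
    exact: bounded_continuous_cim_cauchy_kernel.
- exact/bounded_continuous_integrable/bounded_continuousMl.
- exact: cabs_cauchy_kernelB_le.
Qed.

Lemma cabs_stieltjes_le_near (E dl : R) z : 0 < dl -> Cplus z -> cabs (z - cR E) <= dl ->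
  cabs (stieltjes mu z) <= cabs (stieltjes mu (Complex E dl)) +
    Num.sqrt (stieltjes_im_ratio z) * (dl + cabs (stieltjes mu (Complex E dl))).
Proof.
move=> dl_gt0 Cz zE; set w := Complex E dl; have Cw : Cplus w by [].
set mw := cabs (stieltjes mu w); set r := stieltjes_im_ratio z.
have r_gt0 : 0 < r := stieltjes_im_ratio_gt0 Cz.
set u := Num.sqrt r; have u_gt0 : 0 < u by rewrite sqrtr_gt0.
have zw : cabs (z - w) <= 2 * dl.
  have -> : z - w = (z - cR E) - (w - cR E) by rewrite opprB addrA subrK.
  have wE : cabs (w - cR E) = dl.
    by rewrite /cabs /= subrr subr0 expr0n add0r sqrtr_sqr gtr0_norm.
  by apply: le_trans (cabsD_le _ _) _; rewrite cabsN wE; lra.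
set rw := stieltjes_im_ratio w; have rw_gt0 : 0 < rw := stieltjes_im_ratio_gt0 Cw.
have rw_le : dl * rw <= mw by have := cim_le_cabs (stieltjes mu w); rewrite cim_stieltjes.
have ur : u^-1 * r = u by rewrite -[r](sqr_sqrtr (ltW r_gt0)) -/u expr2 mulKf ?gt_eqF.
have := cabs_stieltjesB_le Cz Cw (l := u^-1); rewrite invrK invr_gt0 ur => /(_ u_gt0) diff.
have := cabsD_le (stieltjes mu w) (stieltjes mu z - stieltjes mu w); rewrite addrC subrK -/mw.
rewrite -/rw in diff.
have : cabs (z - w) / 2 * (u + u * rw) <= u * (dl + mw).
  have urw_ge0 : 0 <= u + u * rw by rewrite addr_ge0 ?mulr_ge0 ?ltW.
  apply: le_trans (_ : dl * (u + u * rw) <= _); first by rewrite ler_wpM2r //; lra.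
  by have := ler_wpM2l (ltW u_gt0) rw_le; lra.
lra.
Qed.

Lemma stieltjes_small_near_zero (E k : R) : stieltjes_zero mu E -> 0 < k ->
  exists2 dl, 0 < dl & forall z, Cplus z -> cabs (z - cR E) < dl ->
    cabs (stieltjes mu z) ^+ 2 <= k * stieltjes_im_ratio z.
Proof.
move=> mE0 k_gt0; set s := Num.sqrt k; have s_gt0 : 0 < s by rewrite sqrtr_gt0.
have [a0 a0_gt0 ratio_ge] := stieltjes_im_ratio_lower E.
have sa0_gt0 : 0 < Num.sqrt a0 by rewrite sqrtr_gt0.
set ep := Num.min (s / 3) (s * Num.sqrt a0 / 3).
have [ep_le1 ep_le2] : ep <= s / 3 /\ ep <= s * Num.sqrt a0 / 3.
  by rewrite !ge_min !lexx orbT.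
have ep_gt0 : 0 < ep by rewrite lt_min !divr_gt0 ?mulr_gt0.
have [d d_gt0 mw_small] := mE0 ep ep_gt0.
set dl := Num.min (d / 2) (Num.min (s / 3) 1).
have dl_gt0 : 0 < dl by rewrite !lt_min !divr_gt0 // ltr01.
have [dl_le_d dl_le_s dl_le1] : [/\ dl <= d / 2, dl <= s / 3 & dl <= 1].
  by rewrite !ge_min !lexx !orbT.
exists dl => // z Cz zE.
have mw_lt : cabs (stieltjes mu (Complex E dl)) < ep by apply: mw_small => //; lra.
have := cabs_stieltjes_le_near dl_gt0 Cz (ltW zE).
set mw := cabs (stieltjes mu (Complex E dl)) in mw_lt *; set u := Num.sqrt _ => mz_le.
have u_ge : Num.sqrt a0 <= u.
  rewrite ler_sqrt ?(ltW (stieltjes_im_ratio_gt0 Cz)) //.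
  by apply: ratio_ge => //; exact: le_trans (ltW zE) dl_le1.
have mz_su : cabs (stieltjes mu z) <= s * u.
  have : u * (dl + mw) <= u * (2 * s / 3) by rewrite ler_wpM2l ?sqrtr_ge0 //; lra.
  by have := ler_wpM2l (ltW s_gt0) u_ge; lra.
have r_gt0 := stieltjes_im_ratio_gt0 Cz.
rewrite -[k](sqr_sqrtr (ltW k_gt0)) -[stieltjes_im_ratio z](sqr_sqrtr (ltW r_gt0)).
by rewrite -exprMn lerXn2r ?nnegrE ?cabs_ge0 ?mulr_ge0 ?sqrtr_ge0.
Qed.

Lemma cim_Fmu z : cim (Fmu mu z) = cim (stieltjes mu z) / cabs (stieltjes mu z) ^+ 2.
Proof. by rewrite cabs_sqr /Fmu; case: (stieltjes mu z) => a b /=; rewrite opprK. Qed.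

Lemma cabs_stieltjes_subordination_gt (t : R) z zeta : 1 < t -> Cplus zeta ->
  cim zeta <= cim z -> cR t * z - zeta = cR (t - 1) * Fmu mu z ->
  (1 - t^-1) * stieltjes_im_ratio z < cabs (stieltjes mu z) ^+ 2.
Proof.
move=> t_gt1 Czeta zeta_le sub_eq; have Cz : Cplus z := lt_le_trans Czeta zeta_le.
have r_gt0 := stieltjes_im_ratio_gt0 Cz; set r := stieltjes_im_ratio z in r_gt0 *.
have im_m := cim_stieltjes Cz; set n := cabs (stieltjes mu z) ^+ 2.
have n_gt0 : 0 < n.
  have : 0 < cim (stieltjes mu z) by rewrite im_m mulr_gt0.
  by move=> /lt_le_trans/(_ (cim_le_cabs _)) m_gt0; rewrite exprn_gt0.
have : (t * cim z - cim zeta) * n = (t - 1) * (cim z * r).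
  have := congr1 (@cim R) sub_eq; rewrite cimB !cim_cRM cim_Fmu im_m => ->.
  by rewrite -/r -/n -mulrA divfK ?gt_eqF.
have := mulr_gt0 Czeta n_gt0; have tb_gt0 : 0 < t * cim z by rewrite mulr_gt0 //; lra.
move=> zn_gt0 eq_n; rewrite -(ltr_pM2l tb_gt0).
have -> : t * cim z * ((1 - t^-1) * r) = (t - 1) * (cim z * r) by field; lra.
lra.
Qed.

End Stieltjes.

Lemma boundary_extension_approx (R : realType) (omega : R[i] -> R[i]) omegab x w eps :
  boundary_extension omega omegab -> omegab x = Some w -> 0 < eps ->
  exists2 zeta, Cplus zeta & cabs (omega zeta - w) < eps.
Proof.
move=> ext xw eps_gt0; have := ext x; rewrite xw => /(_ eps eps_gt0) [d d_gt0 near].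
have d2_gt0 : 0 < d / 2 by rewrite divr_gt0.
exists (Complex x (d / 2)) => //; apply: near => //.
by rewrite /cabs /= subrr subr0 expr0n add0r sqrtr_sqr gtr0_norm //; lra.
Qed.

Theorem lemma3p1 (R : realType) (nac npp nout : nat) (mu : probability R R)
  (t E : R) (omega : R[i] -> R[i]) (omegab : R -> option R[i]) :
  assumptionA nac npp nout mu ->
  1 < t ->
  stieltjes_zero mu E ->
  subordination mu t omega ->
  boundary_extension omega omegab ->
  exists M : R, 0 < M /\
    forall (x : R) (w : R[i]), omegab x = Some w -> M <= cabs (w - cR E).
Proof.
move=> _ t_gt1 mE0 [_ im_omega _ omega_eq] omega_ext.
have k_gt0 : 0 < 1 - t^-1 by rewrite subr_gt0 invf_lt1 //; lra.
have [dl dl_gt0 m_small] := stieltjes_small_near_zero mE0 k_gt0.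
exists (dl / 2); split => [|x w omega_xw]; first by rewrite divr_gt0.
rewrite leNgt; apply/negP => w_near.
have eps_gt0 : 0 < dl / 2 - cabs (w - cR E) by lra.
have [zeta Czeta omega_w] := boundary_extension_approx omega_ext omega_xw eps_gt0.
have zeta_le := im_omega zeta Czeta.
have omega_near : cabs (omega zeta - cR E) < dl.
  have -> : omega zeta - cR E = (omega zeta - w) + (w - cR E) by rewrite addrA subrK.
  by apply: le_lt_trans (cabsD_le _ _) _; lra.
have := m_small _ (lt_le_trans Czeta zeta_le) omega_near.
have := cabs_stieltjes_subordination_gt t_gt1 Czeta zeta_le (omega_eq zeta Czeta).
lra.
Qed.
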